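(* Let $T\ge1$ and let $V_1,W_1,\dots,V_T,W_T$ be finite-dimensional systems, $\tilde V:=W_T\otimes V_T\otimes\cdots\otimes W_1\otimes V_1$. Assume that for each $t\in\{1,\dots,T\}$ there is a group $\mathcal{G}^{(t)}$ with two projective unitary representations $g\mapsto U^{(t)}_g$ on $W_t$ and $g\mapsto\tilde U^{(t)}_g$ on $V_t$, where $g\mapsto\tilde U^{(t)}_g$ is irreducible for every $t$. Then every $\chi^\star\in\mathsf{Pos}_{\tilde V}$ satisfying $$\big(\hat 1_{W_T\otimes V_T\otimes\cdots\otimes W_{t+1}\otimes V_{t+1}}\otimes\mathrm{Ad}_{U^{(t)}_g\otimes\tilde U^{(t)}_g}\otimes\hat 1_{W_{t-1}\otimes V_{t-1}\otimes\cdots\otimes W_1\otimes V_1}\big)(\chi^\star)=\chi^\star\quad\forall t\in\{1,\dots,T\},\ g\in\mathcal{G}^{(t)}$$ is of the form $\chi^\star=\lambda\tilde\chi$ with $\lambda\ge0$ and $\tilde\chi\in\mathsf{Comb}_{W_T,V_T,\dots,W_1,V_1}$.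
   Context: $\mathsf{Pos}_X$: positive semidefinite matrices on $X$; $\hat 1_X$: identity map on operators on $X$; $\mathrm{Ad}_U(\rho):=U\rho U^\dagger$. $\mathsf{Comb}_{W_T,V_T,\dots,W_1,V_1}$ is the set of $\tau\in\mathsf{Pos}_{\tilde V}$ for which there exist $\tau^{(t)}\in\mathsf{Pos}_{W_t\otimes V_t\otimes\cdots\otimes W_1\otimes V_1}$ ($1\le t\le T-1$) with $\mathrm{Tr}_{W_t}\tau^{(t)}=I_{V_t}\otimes\tau^{(t-1)}$ for all $1\le t\le T$, where $\tau^{(0)}:=1$ and $\tau^{(T)}:=\tau$. *)

From HB Require Import structures.
From mathcomp Require Import all_boot all_order all_algebra.
From mathcomp Require Export mxtens.
From Stdlib Require Import PeanoNat.
Set Implicit Arguments. Unset Strict Implicit. Unset Printing Implicit Defensive.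
Import Order.TTheory GRing.Theory Num.Theory.
Local Open Scope ring_scope.

Record group := Group {
  gcar :> Type;
  gmul : gcar -> gcar -> gcar;
  gone : gcar;
  ginv : gcar -> gcar;
  gmulA : forall x y z, gmul x (gmul y z) = gmul (gmul x y) z;
  gmul1 : forall x, gmul gone x = x;
  gmulV : forall x, gmul (ginv x) x = gone
}.

Section Defs.
Variable C : numClosedFieldType.

Definition adjmx m n (A : 'M[C]_(m, n)) : 'M[C]_(n, m) := (map_mx Num.conj A)^T.

Definition unitary n (U : 'M[C]_n) : Prop := U *m adjmx U = 1%:M.

Definition psd n (A : 'M[C]_n) : Prop :=
  adjmx A = A /\ forall v : 'cV[C]_n, 0 <= (adjmx v *m A *m v) 0 0.

Definition proj_unitary_rep (G : group) n (U : G -> 'M[C]_n) : Prop :=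
  (forall g, unitary (U g)) /\
  (forall g h : G, exists c : C, U (gmul g h) = c *: (U g *m U h)).

(* irreducibility: C^n <> 0 and the only U-invariant subspaces of C^n
   (column vectors, spanned by the transposed rows of S) are 0 and C^n *)
Definition irreducible (G : group) n (U : G -> 'M[C]_n) : Prop :=
  (0 < n)%N /\
  forall S : 'M[C]_n, (forall g, (S *m (U g)^T <= S)%MS) ->
    \rank S = 0%N \/ \rank S = n.

Definition ptrace1 m n (A : 'M[C]_(m * n)) : 'M[C]_n :=
  \matrix_(j, k) \sum_(i < m) A (mxtens_index (i, j)) (mxtens_index (i, k)).

End Defs.

Fixpoint dimS (dW dV : nat -> nat) (t : nat) : nat :=
  match t with
  | 0 => 1
  | s.+1 => (dW s.+1 * (dV s.+1 * dimS dW dV s))%N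
  end.

Fixpoint tensS (C : numClosedFieldType) (dW dV : nat -> nat)
    (X : forall s, 'M[C]_(dW s)) (Y : forall s, 'M[C]_(dV s)) (t : nat)
    : 'M[C]_(dimS dW dV t) :=
  match t with
  | 0 => 1%:M
  | s.+1 => X s.+1 *t (Y s.+1 *t tensS X Y s)
  end.

Definition site (C : numClosedFieldType) (d : nat -> nat) (t : nat)
    (M : 'M[C]_(d t)) (s : nat) : 'M[C]_(d s) :=
  match Nat.eq_dec t s with
  | left e => eq_rect t (fun k => 'M[C]_(d k)) M s e
  | right _ => 1%:M
  end.

Definition comb (C : numClosedFieldType) (dW dV : nat -> nat) (T : nat)
    (tau : 'M[C]_(dimS dW dV T)) : Prop :=
  psd tau /\
  exists taus : forall t, 'M[C]_(dimS dW dV t),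
    taus 0%N = 1%:M /\ taus T = tau /\
    (forall t, (1 <= t < T)%N -> psd (taus t)) /\
    (forall s, (s < T)%N ->
       @ptrace1 C (dW s.+1) (dV s.+1 * dimS dW dV s) (taus s.+1)
       = (1%:M : 'M[C]_(dV s.+1)) *t taus s).

(** Peel off one site at a time.  Tracing [chi] over [W_T] kills the action of
    [U^(T)], so the partial trace commutes with the irreducible [Ũ^(T)] on
    [V_T]; by Schur's lemma it is [1 ⊗ Z] with [Z] positive and invariant under
    the remaining sites.  Iterating down to [t = 0] yields a chain
    [τ^(T) = chi, ..., τ^(0) = λ] of positive matrices linked by
    [Tr_{W_t} τ^(t) = 1 ⊗ τ^(t-1)]; dividing by [λ] gives a comb, and if
    [λ = 0] the whole chain vanishes since a partial trace is faithful on
    positive matrices. *)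

From mathcomp Require Import all_boot all_order all_algebra.
From mathcomp Require spectral.
From Stdlib Require Import PeanoNat.
Import Order.TTheory GRing.Theory Num.Theory.
Local Open Scope ring_scope.
Set Implicit Arguments. Unset Strict Implicit. Unset Printing Implicit Defensive.

Section Matrices.
Variable C : numClosedFieldType.

Lemma big_mxtens_index m n (F : 'I_(m * n) -> C) :
  \sum_p F p = \sum_i \sum_j F (mxtens_index (i, j)).
Proof.
rewrite (reindex (@mxtens_index m n)) /=; last first.
  by exists (@mxtens_unindex m n) => x _; rewrite (mxtens_indexK, mxtens_unindexK).
by rewrite pair_big /=; apply: eq_bigr => -[i j].
Qed.

Lemma tens_scalar_scalar_mx m n (a b : C) :
  (a%:M : 'M[C]_m) *t (b%:M : 'M[C]_n) = (a * b)%:M.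
Proof.
apply/matrixP => p q.
case: (mxtens_indexP p) => i j; case: (mxtens_indexP q) => k l.
rewrite tensmxE !mxE (inj_eq (can_inj (@mxtens_indexK _ _))) xpair_eqE.
by case: (i == k); case: (j == l); rewrite ?mulr0 ?mul0r.
Qed.

Lemma tens1mxZ m n c (X : 'M[C]_n) :
  (1%:M : 'M[C]_m) *t (c *: X) = c *: (1%:M *t X).
Proof.
apply/matrixP => x y; case: (mxtens_indexP x) => a b; case: (mxtens_indexP y) => a' b'.
by rewrite !(tensmxE, mxE) mulrCA.
Qed.

Lemma adjmxE m n (A : 'M[C]_(m, n)) i j : adjmx A i j = (A j i)^*.
Proof. by rewrite !mxE. Qed.

Lemma adjmxT m n p q (A : 'M[C]_(m, n)) (B : 'M[C]_(p, q)) :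
  adjmx (A *t B) = adjmx A *t adjmx B.
Proof. by rewrite /adjmx map_mxT trmx_tens. Qed.

Lemma adjmx1 n : adjmx (1%:M : 'M[C]_n) = 1%:M.
Proof. by rewrite /adjmx map_mx1 trmx1. Qed.

Lemma adjmxD m n (A B : 'M[C]_(m, n)) : adjmx (A + B) = adjmx A + adjmx B.
Proof. by rewrite /adjmx map_mxD linearD. Qed.

Lemma adjmxZ m n c (A : 'M[C]_(m, n)) : adjmx (c *: A) = c^* *: adjmx A.
Proof. by rewrite /adjmx map_mxZ linearZ. Qed.

Lemma adjmx_delta n (a : 'I_n) : adjmx (delta_mx a 0 : 'cV[C]_n) = delta_mx 0 a.
Proof. by apply/matrixP => i j; rewrite !mxE rmorph_nat andbC. Qed.

Lemma unitary1 n : unitary (1%:M : 'M[C]_n).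
Proof. by rewrite /unitary adjmx1 mulmx1. Qed.

Lemma unitaryV n (A : 'M[C]_n) : unitary A -> adjmx A *m A = 1%:M.
Proof. exact: mulmx1C. Qed.

Lemma tensmx1_mulmxE m n k (A : 'M[C]_m) (Y : 'M[C]_(m * n, k)) i j q :
  ((A *t 1%:M) *m Y) (mxtens_index (i, j)) q
  = \sum_a A i a * Y (mxtens_index (a, j)) q.
Proof.
rewrite mxE big_mxtens_index; apply: eq_bigr => a _.
rewrite (bigD1 j) //= tensmxE !mxE eqxx mulr1 big1 ?addr0 // => b /negbTE nb.
by rewrite tensmxE mxE eq_sym nb mulr0 mul0r.
Qed.

Lemma mulmx_tensmx1E m n k (A : 'M[C]_m) (Y : 'M[C]_(k, m * n)) p i l :
  (Y *m (A *t 1%:M)) p (mxtens_index (i, l))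
  = \sum_a Y p (mxtens_index (a, l)) * A a i.
Proof.
rewrite mxE big_mxtens_index; apply: eq_bigr => a _.
rewrite (bigD1 l) //= tensmxE !mxE eqxx mulr1 big1 ?addr0 // => b /negbTE nb.
by rewrite tensmxE mxE nb mulr0 mulr0.
Qed.

Lemma tens1mx_mulmxE m n k (B : 'M[C]_n) (Y : 'M[C]_(m * n, k)) i j q :
  ((1%:M *t B) *m Y) (mxtens_index (i, j)) q
  = \sum_b B j b * Y (mxtens_index (i, b)) q.
Proof.
rewrite mxE big_mxtens_index (bigD1 i) //= [X in _ + X]big1 ?addr0.
  by apply: eq_bigr => b _; rewrite tensmxE mxE eqxx mul1r.
move=> a /negbTE na; apply: big1 => b _.
by rewrite tensmxE mxE eq_sym na mul0r mul0r.
Qed.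

Lemma mulmx_tens1mxE m n k (B : 'M[C]_n) (Y : 'M[C]_(k, m * n)) p i l :
  (Y *m (1%:M *t B)) p (mxtens_index (i, l))
  = \sum_b Y p (mxtens_index (i, b)) * B b l.
Proof.
rewrite mxE big_mxtens_index (bigD1 i) //= [X in _ + X]big1 ?addr0.
  by apply: eq_bigr => b _; rewrite tensmxE mxE eqxx mul1r.
move=> a /negbTE na; apply: big1 => b _.
by rewrite tensmxE mxE na mul0r mulr0.
Qed.

(** ** Partial trace *)

Lemma ptrace1E m n (X : 'M[C]_(m * n)) j k :
  ptrace1 X j k = \sum_i X (mxtens_index (i, j)) (mxtens_index (i, k)).
Proof. by rewrite mxE. Qed.

Lemma ptrace1Z m n c (X : 'M[C]_(m * n)) : ptrace1 (c *: X) = c *: ptrace1 X.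
Proof.
by apply/matrixP => j k; rewrite !mxE mulr_sumr; apply: eq_bigr => i _; rewrite mxE.
Qed.

Lemma ptrace1_scalar m n c : ptrace1 (c%:M : 'M[C]_(m * n)) = (c *+ m)%:M.
Proof.
apply/matrixP => j k; rewrite ptrace1E mxE.
under eq_bigr => i _ do
  rewrite mxE (inj_eq (can_inj (@mxtens_indexK _ _))) xpair_eqE eqxx /=.
by rewrite sumr_const card_ord -!mulrnA mulnC.
Qed.

Lemma ptrace1_mulmxC m n (A : 'M[C]_m) (X : 'M[C]_(m * n)) :
  ptrace1 ((A *t 1%:M) *m X) = ptrace1 (X *m (A *t 1%:M)).
Proof.
apply/matrixP => j k; rewrite !ptrace1E.
under eq_bigr do rewrite tensmx1_mulmxE.
under [RHS]eq_bigr do rewrite mulmx_tensmx1E.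
by rewrite exchange_big; apply: eq_bigr => i _; apply: eq_bigr => a _; rewrite mulrC.
Qed.

Lemma ptrace1_tens1mxl m n (B : 'M[C]_n) (X : 'M[C]_(m * n)) :
  ptrace1 ((1%:M *t B) *m X) = B *m ptrace1 X.
Proof.
apply/matrixP => j k; rewrite ptrace1E mxE.
under eq_bigr do rewrite tens1mx_mulmxE.
rewrite exchange_big; apply: eq_bigr => b _.
by rewrite ptrace1E mulr_sumr.
Qed.

Lemma ptrace1_tens1mxr m n (B : 'M[C]_n) (X : 'M[C]_(m * n)) :
  ptrace1 (X *m (1%:M *t B)) = ptrace1 X *m B.
Proof.
apply/matrixP => j k; rewrite ptrace1E mxE.
under eq_bigr do rewrite mulmx_tens1mxE.
rewrite exchange_big; apply: eq_bigr => b _.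
by rewrite ptrace1E mulr_suml.
Qed.

Lemma ptrace1_conj_tens m n (A : 'M[C]_m) (B : 'M[C]_n) (X : 'M[C]_(m * n)) :
  unitary A ->
  ptrace1 ((A *t B) *m X *m adjmx (A *t B)) = B *m ptrace1 X *m adjmx B.
Proof.
move=> /unitaryV uA; rewrite adjmxT (tensmx_decr A) (tensmx_decl (adjmx A)).
rewrite -!mulmxA ptrace1_mulmxC !mulmxA -[_ *m (A *t 1%:M)]mulmxA.
rewrite tensmx_mul uA mul1mx tens_scalar_scalar_mx mulr1 mulmx1.
by rewrite ptrace1_tens1mxr ptrace1_tens1mxl.
Qed.

(** ** Positive semidefinite matrices *)

Lemma bformE n (u w : 'cV[C]_n) (A : 'M[C]_n) :
  (adjmx u *m A *m w) 0 0 = \sum_p \sum_q (u p 0)^* * A p q * w q 0.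
Proof.
rewrite mxE exchange_big; apply: eq_bigr => q _; rewrite mxE mulr_suml.
by apply: eq_bigr => p _; rewrite adjmxE.
Qed.

Lemma bform_delta n (X : 'M[C]_n) a b :
  (adjmx (delta_mx a 0 : 'cV[C]_n) *m X *m (delta_mx b 0 : 'cV[C]_n)) 0 0 = X a b.
Proof. by rewrite adjmx_delta -rowE -colE !mxE. Qed.

Lemma psd_diag_ge0 n (X : 'M[C]_n) p : psd X -> 0 <= X p p.
Proof. by move=> [_ h]; have := h (delta_mx p 0); rewrite bform_delta. Qed.

Lemma psd_diag_eq0 n (X : 'M[C]_n) : psd X -> (forall p, X p p = 0) -> X = 0.
Proof.
move=> [hX qX] X0; apply/matrixP => a b; rewrite mxE.
have [->|_] := eqVneq a b; first exact: X0.
set x := X a b.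
have Xba : X b a = x^* by rewrite -[in LHS]hX adjmxE.
(* testing against [e_a - x^* e_b] gives [-2 |x|^2 >= 0] *)
have := qX (delta_mx a 0 + (- x^*) *: delta_mx b 0).
rewrite adjmxD adjmxZ !(mulmxDl, mulmxDr) -!scalemxAl -!scalemxAr.
rewrite ![((_ + _)%R : 'M_1) 0 0]mxE ![((_ *: _) : 'M_1) 0 0]mxE !bform_delta.
rewrite !X0 Xba -/x !mulr0 addr0 add0r rmorphN /= conjCK.
rewrite !mulNr -opprD oppr_ge0 -normCK -normCKC => h.
have h2 : `|x| ^+ 2 <= 0 by rewrite -(pmulrn_lle0 _ (isT : (0 < 2)%N)) mulr2n.
by apply/eqP; rewrite -normr_eq0 -sqrf_eq0 eq_le h2 exprn_ge0.
Qed.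

Lemma psd0 n : psd (0 : 'M[C]_n).
Proof.
split; first by apply/matrixP => i j; rewrite !mxE rmorph0.
by move=> v; rewrite mulmx0 mul0mx mxE.
Qed.

Lemma psdD n (A B : 'M[C]_n) : psd A -> psd B -> psd (A + B).
Proof.
move=> [hA qA] [hB qB]; split; first by rewrite adjmxD hA hB.
by move=> v; rewrite mulmxDr mulmxDl mxE addr_ge0.
Qed.

Lemma psdZ n c (A : 'M[C]_n) : 0 <= c -> psd A -> psd (c *: A).
Proof.
move=> c0 [hA qA]; split; first by rewrite adjmxZ hA geC0_conj.
by move=> v; rewrite -scalemxAr -scalemxAl mxE mulr_ge0.
Qed.

Lemma psd_scalar n c : 0 <= c -> psd (c%:M : 'M[C]_n).
Proof.
move=> c0; rewrite -scalemx1; apply: psdZ => //; split; first exact: adjmx1.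
move=> v; rewrite bformE; apply: sumr_ge0 => p _.
rewrite (bigD1 p) //= [X in _ + X]big1 ?addr0.
  by rewrite mxE eqxx mulr1 -normCKC exprn_ge0.
by move=> q /negbTE nq; rewrite mxE eq_sym nq mulr0 mul0r.
Qed.

Definition blk m n (i : 'I_m) (Y : 'M[C]_(m * n)) : 'M[C]_n :=
  \matrix_(j, k) Y (mxtens_index (i, j)) (mxtens_index (i, k)).

Lemma blk_tens1mx m n (i : 'I_m) (Z : 'M[C]_n) : blk i (1%:M *t Z) = Z.
Proof. by apply/matrixP => j k; rewrite mxE tensmxE mxE eqxx mul1r. Qed.

Lemma ptrace1_blk m n (X : 'M[C]_(m * n)) : ptrace1 X = \sum_i blk i X.
Proof. by apply/matrixP => j k; rewrite summxE !mxE; apply: eq_bigr => i _; rewrite mxE. Qed.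

Lemma psd_blk m n (i : 'I_m) (Y : 'M[C]_(m * n)) : psd Y -> psd (blk i Y).
Proof.
move=> [hY qY]; split.
  by apply/matrixP => j k; rewrite adjmxE !mxE -[in RHS]hY adjmxE.
move=> v.
pose w : 'cV[C]_(m * n) :=
  \col_p (if (mxtens_unindex p).1 == i then v (mxtens_unindex p).2 0 else 0).
have wE a j : w (mxtens_index (a, j)) 0 = if a == i then v j 0 else 0.
  by rewrite mxE mxtens_indexK.
suff <- : (adjmx w *m Y *m w) 0 0 = (adjmx v *m blk i Y *m v) 0 0 by [].
rewrite !bformE big_mxtens_index (bigD1 i) //= [X in _ + X]big1 ?addr0; last first.
  move=> a /negbTE na; apply: big1 => j _; apply: big1 => q _.
  by rewrite wE na rmorph0 !mul0r.
apply: eq_bigr => j _; rewrite big_mxtens_index (bigD1 i) //= [X in _ + X]big1 ?addr0.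
  by apply: eq_bigr => k _; rewrite !wE eqxx mxE.
by move=> c /negbTE nc; apply: big1 => k _; rewrite (wE c) nc mulr0.
Qed.

Lemma psd_ptrace1 m n (X : 'M[C]_(m * n)) : psd X -> psd (ptrace1 X).
Proof.
move=> hX; rewrite ptrace1_blk.
by apply: (big_ind (@psd C n)) => [|A B|i _]; [exact: psd0 | exact: psdD | exact: psd_blk].
Qed.

Lemma psd_ptrace1_eq0 m n (X : 'M[C]_(m * n)) : psd X -> ptrace1 X = 0 -> X = 0.
Proof.
move=> hX X0; apply: psd_diag_eq0 => // p.
case: (mxtens_indexP p) => i j.
have := congr1 (fun A : 'M[C]_n => A j j) X0; rewrite /= ptrace1E mxE => hs.
exact: (psumr_eq0P (fun i _ => psd_diag_ge0 (mxtens_index (i, j)) hX) hs).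
Qed.

(** ** Schur's lemma *)

Section Schur.
Variables (G : group) (n : nat) (Ut : G -> 'M[C]_n).
Hypotheses (Ut_unitary : forall g, unitary (Ut g)) (Ut_irr : irreducible Ut).

Lemma schur_scalar (M : 'M[C]_n) :
  (forall g, Ut g *m M *m adjmx (Ut g) = M) -> exists z, M = z%:M.
Proof.
move=> M_inv; have [n_gt0 irrS] := Ut_irr.
have commM g : Ut g *m M = M *m Ut g.
  by rewrite -{2}(M_inv g) -!mulmxA unitaryV // mulmx1.
have [a eig_a] := spectral.eigenvalue_closed (M^T) n_gt0.
pose S := eigenspace M^T a.
have SM : S *m M^T = a *: S by apply/eigenspaceP; apply: submx_refl.
have S_inv g : (S *m (Ut g)^T <= S)%MS.
  by apply/eigenspaceP; rewrite -mulmxA -trmx_mul -commM trmx_mul mulmxA SM scalemxAl.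
case: (irrS S S_inv) => rkS.
  by move: eig_a; rewrite /eigenvalue -/S -mxrank_eq0 rkS.
have /eigenspaceP : (1%:M <= S)%MS by apply: submx_full; rewrite /row_full rkS.
by rewrite mul1mx => MT; exists a; rewrite -[M]trmxK MT scalemx1 tr_scalar_mx.
Qed.

Lemma schur_tens1mx p (Y : 'M[C]_(n * p)) :
  (forall g, (Ut g *t 1%:M) *m Y *m adjmx (Ut g *t 1%:M) = Y) ->
  exists Z : 'M[C]_p, Y = 1%:M *t Z.
Proof.
move=> Y_inv; have [n_gt0 _] := Ut_irr; pose j0 := Ordinal n_gt0.
pose Yab a b := \matrix_(j, k) Y (mxtens_index (j, a)) (mxtens_index (k, b)).
have Yab_inv a b g : Ut g *m Yab a b *m adjmx (Ut g) = Yab a b.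
  apply/matrixP => j k.
  have := congr1 (fun A : 'M[C]_(n * p) => A (mxtens_index (j, a)) (mxtens_index (k, b))) (Y_inv g).
  rewrite adjmxT adjmx1 /= mulmx_tensmx1E => Y_jk.
  rewrite [RHS]mxE -Y_jk mxE; apply: eq_bigr => c _; rewrite tensmx1_mulmxE mxE.
  by congr (_ * _); apply: eq_bigr => d _; rewrite mxE.
exists (blk j0 Y); apply/matrixP => x y.
case: (mxtens_indexP x) => j a; case: (mxtens_indexP y) => k b.
have [z Yz] := schur_scalar (Yab_inv a b).
rewrite tensmxE !mxE.
have -> : Y (mxtens_index (j, a)) (mxtens_index (k, b)) = Yab a b j k by rewrite mxE.
have -> : Y (mxtens_index (j0, a)) (mxtens_index (j0, b)) = Yab a b j0 j0 by rewrite mxE.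
by rewrite Yz !mxE eqxx mulr1n mulr_natl.
Qed.

End Schur.

End Matrices.

Definition extend_at {C : numClosedFieldType} {dW dV : nat -> nat} (k : nat)
    (X : 'M[C]_(dimS dW dV k)) (taus : forall t, 'M[C]_(dimS dW dV t)) t
    : 'M[C]_(dimS dW dV t) :=
  match Nat.eq_dec k t with
  | left e => eq_rect k (fun j => 'M[C]_(dimS dW dV j)) X t e
  | right _ => taus t
  end.
Arguments extend_at {C dW dV} k X taus t.

Lemma extend_at_eq (C : numClosedFieldType) (dW dV : nat -> nat) k
    (X : 'M[C]_(dimS dW dV k)) taus :
  extend_at k X taus k = X.
Proof. by rewrite /extend_at; case: Nat.eq_dec => [e|//]; rewrite (eq_axiomK e). Qed.

Lemma extend_at_neq (C : numClosedFieldType) (dW dV : nat -> nat) k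
    (X : 'M[C]_(dimS dW dV k)) (taus : forall t, 'M[C]_(dimS dW dV t)) t :
  k <> t -> extend_at k X taus t = taus t.
Proof. by rewrite /extend_at; case: Nat.eq_dec. Qed.

Section Chains.
Variables (C : numClosedFieldType) (dW dV : nat -> nat).
Local Notation mxS t := 'M[C]_(dimS dW dV t).

Definition ptrace_chain T (taus : forall t, mxS t) : Prop :=
  (forall t, (t <= T)%N -> psd (taus t)) /\
  (forall s, (s < T)%N ->
     @ptrace1 C (dW s.+1) (dV s.+1 * dimS dW dV s)%N (taus s.+1)
     = (1%:M : 'M[C]_(dV s.+1)) *t taus s).

Lemma ptrace_chain_extend T taus (X : mxS T.+1) :
  ptrace_chain T taus -> psd X ->
  @ptrace1 C (dW T.+1) (dV T.+1 * dimS dW dV T)%N X = 1%:M *t taus T ->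
  ptrace_chain T.+1 (extend_at T.+1 X taus).
Proof.
have neq t : (t <= T)%N -> T.+1 <> t by move=> le_tT eTt; rewrite -eTt ltnn in le_tT.
move=> [psd_taus tr_taus] psdX trX; split.
  move=> t; rewrite leq_eqVlt => /orP [/eqP ->|lt_tT]; first by rewrite extend_at_eq.
  by rewrite extend_at_neq; [apply: psd_taus | apply: neq].
move=> s; rewrite ltnS leq_eqVlt => /orP [/eqP ->|lt_sT].
  by rewrite extend_at_eq extend_at_neq //; apply: neq.
rewrite !extend_at_neq ?tr_taus //; apply: neq => //; exact: ltnW.
Qed.

Lemma ptrace_chainZ T taus c :
  0 <= c -> ptrace_chain T taus -> ptrace_chain T (fun t => c *: taus t).
Proof.
move=> c0 [psd_taus tr_taus]; split; first by move=> t le_tT; apply/psdZ/psd_taus.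
by move=> s lt_sT; rewrite ptrace1Z tr_taus // tens1mxZ.
Qed.

Lemma ptrace_chain_eq0 T taus : ptrace_chain T taus -> taus 0%N = 0 -> taus T = 0.
Proof.
move=> [psd_taus tr_taus] taus0.
suff: forall t, (t <= T)%N -> taus t = 0 by apply.
elim=> [//|t IHt] le_tT.
apply: (@psd_ptrace1_eq0 C (dW t.+1) (dV t.+1 * dimS dW dV t)%N).
  exact: (psd_taus t.+1 le_tT).
by rewrite (tr_taus t le_tT) IHt ?tensmx0 // ltnW.
Qed.

Lemma comb_ptrace_chain T taus :
  ptrace_chain T taus -> taus 0%N = 1%:M -> comb (taus T).
Proof.
move=> [psd_taus tr_taus] taus0; split; first exact: psd_taus.
exists taus; do 3!split => //.
by move=> t /andP[_ /ltnW]; apply: psd_taus.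
Qed.

Lemma ptrace_chain_scalar T :
  (forall t, (1 <= t <= T)%N -> (0 < dW t)%N) ->
  ptrace_chain T (fun t => (\prod_(1 <= s < t.+1) (dW s)%:R^-1)%:M).
Proof.
move=> dW_gt0; split.
  by move=> t _; apply: psd_scalar; apply: prodr_ge0 => s _; rewrite invr_ge0 ler0n.
move=> s lt_sT; rewrite ptrace1_scalar tens_scalar_scalar_mx mul1r big_nat_recr //=.
rewrite -[_ / _ *+ _]mulr_natr divfK // pnatr_eq0 -lt0n.
by apply: dW_gt0; rewrite /= lt_sT.
Qed.

End Chains.

Lemma site_at (C : numClosedFieldType) (d : nat -> nat) t (M : 'M[C]_(d t)) :
  site M t = M.
Proof. by rewrite /site; case: Nat.eq_dec => [e|//]; rewrite (eq_axiomK e). Qed.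

Lemma site_off (C : numClosedFieldType) (d : nat -> nat) t (M : 'M[C]_(d t)) s :
  t <> s -> site M s = 1%:M.
Proof. by rewrite /site; case: Nat.eq_dec. Qed.

Lemma tensS_site_lt (C : numClosedFieldType) (dW dV : nat -> nat) t
    (A : 'M[C]_(dW t)) (B : 'M[C]_(dV t)) T :
  (T < t)%N -> tensS (site A) (site B) T = 1%:M.
Proof.
elim: T => [//|T IH] ltTt /=.
rewrite !site_off ?IH ?tens_scalar_scalar_mx ?mulr1 ?(ltnW ltTt) //;
  by move=> eTt; rewrite eTt ltnn in ltTt.
Qed.

Section Reduction.
Local Unset Implicit Arguments.
Variables (C : numClosedFieldType) (dW dV : nat -> nat) (G : nat -> group).
Variables (U : forall t, G t -> 'M[C]_(dW t)) (Ut : forall t, G t -> 'M[C]_(dV t)).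
Variable N : nat.
Hypotheses (U_unitary : forall t, (1 <= t <= N)%N -> forall g, unitary (U t g))
  (Ut_unitary : forall t, (1 <= t <= N)%N -> forall g, unitary (Ut t g))
  (Ut_irr : forall t, (1 <= t <= N)%N -> irreducible (Ut t)).

Definition site_invariant T (chi : 'M[C]_(dimS dW dV T)) : Prop :=
  forall t, (1 <= t <= T)%N -> forall g : G t,
    let O := tensS (site (U t g)) (site (Ut t g)) T in
    O *m chi *m adjmx O = chi.

Lemma site_invariant_ptrace1 T (chi : 'M[C]_(dimS dW dV T.+1)) :
  (T < N)%N -> site_invariant T.+1 chi ->
  exists Z, @ptrace1 C (dW T.+1) (dV T.+1 * dimS dW dV T)%N chi = 1%:M *t Z.
Proof.
move=> lt_TN chi_inv.
have top : (1 <= T.+1 <= N)%N by [].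
apply: (schur_tens1mx (Ut_unitary _ top) (Ut_irr _ top)) => g.
have := chi_inv T.+1 (leqnn T.+1) g; rewrite /= !site_at tensS_site_lt // => {2}<-.
by rewrite ptrace1_conj_tens //; apply: U_unitary.
Qed.

Lemma site_invariant_reduce T (chi : 'M[C]_(dimS dW dV T.+1)) Z :
  (0 < dV T.+1)%N -> site_invariant T.+1 chi ->
  @ptrace1 C (dW T.+1) (dV T.+1 * dimS dW dV T)%N chi = 1%:M *t Z ->
  site_invariant T Z.
Proof.
move=> dV_gt0 chi_inv trZ t /andP[t_gt0 le_tT] g /=.
set O := tensS _ _ T.
have neq : t <> T.+1 by move=> etT; rewrite etT ltnn in le_tT.
have le_tT1 : (1 <= t <= T.+1)%N by rewrite t_gt0 leqW.
have := chi_inv t le_tT1 g; rewrite /= !(site_off _ neq) -/O.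
move=> /(congr1 (@ptrace1 C (dW T.+1) (dV T.+1 * dimS dW dV T)%N)).
rewrite ptrace1_conj_tens; last exact: unitary1.
rewrite trZ adjmxT adjmx1 !tensmx_mul !mul1mx.
by move=> /(congr1 (blk (Ordinal dV_gt0))); rewrite !blk_tens1mx.
Qed.

Lemma site_invariant_chain T (chi : 'M[C]_(dimS dW dV T)) :
  (T <= N)%N -> psd chi -> site_invariant T chi ->
  exists taus, [/\ ptrace_chain T taus, taus T = chi & exists lam, taus 0%N = lam%:M].
Proof.
elim: T chi => [|T IH] chi le_TN psd_chi chi_inv.
  exists (extend_at 0%N chi (fun=> 0)); rewrite extend_at_eq; split => //.
    by split=> // t; rewrite leqn0 => /eqP ->; rewrite extend_at_eq.
  by exists (chi 0 0); apply: mx11_scalar.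
have [Z trZ] := site_invariant_ptrace1 _ _ le_TN chi_inv.
have top : (1 <= T.+1 <= N)%N by [].
have [dV_gt0 _] := Ut_irr _ top.
have psd_Z : psd Z.
  by rewrite -(blk_tens1mx (Ordinal dV_gt0) Z) -trZ; apply/psd_blk/psd_ptrace1.
have [taus [chain_taus tausT [lam taus0]]] :=
  IH Z (ltnW le_TN) psd_Z (site_invariant_reduce _ _ _ dV_gt0 chi_inv trZ).
exists (extend_at T.+1 chi taus); split.
- by apply: ptrace_chain_extend; rewrite ?tausT.
- by rewrite extend_at_eq.
- by exists lam; rewrite extend_at_neq.
Qed.

End Reduction.

Theorem lemma2 (C : numClosedFieldType) (T : nat) (hT : (1 <= T)%N)
  (dW dV : nat -> nat) (hdW : forall t, (1 <= t <= T)%N -> (0 < dW t)%N)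
  (G : nat -> group)
  (U : forall t, G t -> 'M[C]_(dW t)) (Ut : forall t, G t -> 'M[C]_(dV t))
  (hU : forall t, (1 <= t <= T)%N -> proj_unitary_rep (U t))
  (hUt : forall t, (1 <= t <= T)%N -> proj_unitary_rep (Ut t))
  (hirr : forall t, (1 <= t <= T)%N -> irreducible (Ut t))
  (chi : 'M[C]_(dimS dW dV T)) (hchi : psd chi)
  (hsym : forall t, (1 <= t <= T)%N -> forall g : G t,
     let O := tensS (site (U t g)) (site (Ut t g)) T in
     O *m chi *m adjmx O = chi) :
  exists lam : C, 0 <= lam /\
    exists chit : 'M[C]_(dimS dW dV T), comb chit /\ chi = lam *: chit.
Proof.
have [taus [chain_taus tausT [lam taus0]]] :=
  @site_invariant_chain C dW dV G U Ut T (fun t ht => (hU t ht).1)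
    (fun t ht => (hUt t ht).1) hirr T chi (leqnn T) hchi hsym.
have lam_ge0 : 0 <= lam.
  by have := psd_diag_ge0 0 (chain_taus.1 0%N isT); rewrite taus0 mxE eqxx.
exists lam; split => //.
have [lam0|lam_neq0] := eqVneq lam 0.
  exists (\prod_(1 <= s < T.+1) (dW s)%:R^-1)%:M; split.
    by apply: (comb_ptrace_chain (@ptrace_chain_scalar C dW dV T hdW)); rewrite /= big_geq.
  rewrite lam0 scale0r -tausT; apply: (ptrace_chain_eq0 chain_taus).
  by rewrite taus0 lam0 raddf0.
exists (lam^-1 *: chi); split; last by rewrite scalerA mulfV // scale1r.
rewrite -tausT; apply: (comb_ptrace_chain (ptrace_chainZ _ chain_taus)).
  by rewrite invr_ge0.
by rewrite taus0 scale_scalar_mx mulVf.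
Qed.
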